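(* Let $n\ge3$, $0<1/b_n\le 1/c_n$, and let $V=(v_{ij})$ be a symmetric $n\times n$ matrix in $\mathcal L_n(1/b_n,1/c_n)$. Let $r\in\{1,\dots,n-1\}$ and let $V_{22}$ be the bottom-right $(n-r)\times(n-r)$ block of $V$. Let $S=\mathrm{diag}(1/v_{11},\dots,1/v_{nn})$ and $S_{22}=\mathrm{diag}(1/v_{r+1,r+1},\dots,1/v_{nn})$. Then $V$ and $V_{22}$ are invertible and $$\max\{\|V^{-1}-S\|_{\max},\ \|V_{22}^{-1}-S_{22}\|_{\max}\}\le\frac{2b_n^2}{c_n(n-1)^2}\Big(\frac{nb_n}{2(n-2)c_n}+\frac12\Big).$$
   Context: For $m,M>0$, $\mathcal L_n(m,M)$ is the class of $n\times n$ matrices $V=(v_{ij})$ with $v_{ii}=\sum_{j\ne i}v_{ij}$ for $i=1,\dots,n$ and $m\le v_{ij}\le M$ for all $i\ne j$. For a matrix $J$, $\|J\|_{\max}=\max_{i,j}|J_{ij}|$. *)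

From mathcomp Require Import all_boot all_order all_algebra.
Set Implicit Arguments. Unset Strict Implicit. Unset Printing Implicit Defensive.
Import Order.TTheory GRing.Theory Num.Theory.
Local Open Scope ring_scope.

Definition mxmaxnorm (R : realFieldType) (p q : nat) (J : 'M[R]_(p, q)) : R :=
  \big[Num.max/0]_(i < p) \big[Num.max/0]_(j < q) `|J i j|.

Definition in_Lclass (R : realFieldType) (n : nat) (m M : R) (V : 'M[R]_n) : Prop :=
  (forall i : 'I_n, V i i = \sum_(j < n | j != i) V i j) /\
  (forall i j : 'I_n, i != j -> m <= V i j <= M).

Definition inv_diag (R : realFieldType) (n : nat) (V : 'M[R]_n) : 'M[R]_n :=
  diag_mx (\row_i (V i i)^-1).

From mathcomp Require Import all_boot all_order all_algebra.
From mathcomp Require Import ring lra.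
Import Order.TTheory GRing.Theory Num.Theory.
Set Implicit Arguments. Unset Strict Implicit. Unset Printing Implicit Defensive.
Local Open Scope ring_scope.

(* Let h be a row vector such that (h V)_i lies in [-g, 0] wherever h_i <> 0,
   and let h_a, h_b be its largest and smallest entries. Symmetry and the
   row-sum condition give (h V)_i = sum_{j <> i} v_ij (h_i + h_j); comparing
   with h_a and h_b in rows a and b yields h_a + h_b <= 0,
   -(h_a + h_b) <= g / ((n-1) m) and (n-2) m^2 (h_a - h_b) <= g (m + M), hence
   |h_i| <= -h_b <= Lbound n m M g. With g = 0 this kills the kernel of V; the
   rows h = v_kk (V^-1 - S)_k satisfy the hypothesis with g = M, since
   h V = v_kk e_k - V_k. For V22 the same argument is run on V with
   h = (0, x), which vanishes on the first r coordinates. *)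

Definition Lbound (R : realFieldType) (n : nat) (m M g : R) : R :=
  (g * (m + M) / (m ^+ 2 * (n%:R - 2)) + g / ((n%:R - 1) * m)) / 2.

Lemma sumr_neq_spread (R : comPzRingType) n (F : 'I_n -> R) a b :
  \sum_(j < n | j != a) (F j - F b) + \sum_(j < n | j != b) (F a - F j)
  = (n%:R - 2) * (F a - F b).
Proof.
have sum_full : \sum_j (F j - F b) + \sum_j (F a - F j) = n%:R * (F a - F b).
  rewrite -big_split /= (eq_bigr (fun=> F a - F b)) => [|j _]; last by ring.
  by rewrite sumr_const card_ord mulr_natl.
have sum_neq i (G : 'I_n -> R) : \sum_(j < n | j != i) G j = \sum_j G j - G i.
  by rewrite [\sum_j _](bigD1 i) //= addrAC subrr add0r.
rewrite !sum_neq addrACA sum_full; ring.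
Qed.

Lemma sumr_neq_const (R : pzRingType) n (i : 'I_n) (c : R) :
  \sum_(j < n | j != i) c = (n%:R - 1) * c.
Proof.
rewrite sumr_const cardC1 card_ord mulrBl mul1r mulr_natl.
by rewrite -[in RHS](prednK (leq_ltn_trans (leq0n i) (ltn_ord i))) mulrSr addrK.
Qed.

Lemma Lbound0 (R : realFieldType) n (m M : R) : Lbound n m M 0 = 0.
Proof. by rewrite /Lbound !(mul0r, add0r). Qed.

Lemma Lbound_ge0 (R : realFieldType) n (m M g : R) :
  (3 <= n)%N -> 0 < m -> 0 <= M -> 0 <= g -> 0 <= Lbound n m M g.
Proof.
move=> n_ge3 m_gt0 M_ge0 g_ge0; have N3 : 3 <= n%:R :> R by rewrite (ler_nat R 3).
rewrite /Lbound; apply/divr_ge0/ler0n/addr_ge0; apply: divr_ge0 => //.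
- exact/mulr_ge0/addr_ge0/M_ge0/ltW.
- by apply/mulr_ge0/ltW; [exact: sqr_ge0 | lra].
- by apply/mulr_ge0/ltW; [lra|].
Qed.

Lemma unitmx_of_kernel_bound (R : realFieldType) p (A : 'M[R]_p) :
    (forall x : 'rV_p, (forall i, x 0 i != 0 -> - 0 <= (x *m A) 0 i <= 0) ->
      forall i, `|x 0 i| <= 0) ->
  A \in unitmx.
Proof.
move=> bound; rewrite -row_free_unit; apply: inj_row_free => x xA0.
apply/rowP => i; rewrite mxE; apply/eqP; rewrite -normr_le0; apply: bound => j _.
by rewrite xA0 mxE oppr0 lexx.
Qed.

Section Lclass.
Variables (R : realFieldType) (n : nat) (m M : R) (V : 'M[R]_n).
Hypotheses (n_ge3 : (3 <= n)%N) (m_gt0 : 0 < m).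
Hypotheses (V_sym : V^T = V) (V_L : in_Lclass m M V).

Let V_diag : forall i, V i i = \sum_(j < n | j != i) V i j := proj1 V_L.
Let V_offdiag : forall i j, i != j -> m <= V i j <= M := proj2 V_L.

Lemma Lclass_diag_ge i : (n%:R - 1) * m <= V i i.
Proof.
rewrite V_diag -(sumr_neq_const i); apply: ler_sum => j ji.
by rewrite eq_sym in ji; case/andP: (V_offdiag ji).
Qed.

Lemma Lclass_diag_le i : V i i <= (n%:R - 1) * M.
Proof.
rewrite V_diag -(sumr_neq_const i); apply: ler_sum => j ji.
by rewrite eq_sym in ji; case/andP: (V_offdiag ji).
Qed.

Let N3 : 3 <= n%:R :> R. Proof. by rewrite (ler_nat R 3). Qed.

Let n1m_gt0 : 0 < (n%:R - 1) * m. Proof. by apply: mulr_gt0 => //; have := N3; lra. Qed.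

Lemma Lclass_diag_gt0 i : 0 < V i i.
Proof. exact: lt_le_trans (Lclass_diag_ge i). Qed.

Lemma Lclass_M_ge_m : m <= M.
Proof.
have lt0 : (0 < n)%N by apply: leq_trans n_ge3.
have lt1 : (1 < n)%N by apply: leq_trans n_ge3.
by case/andP: (V_offdiag (isT : Ordinal lt0 != Ordinal lt1)) => /le_trans; apply.
Qed.

Lemma mulmx_Lclass (h : 'rV[R]_n) i :
  (h *m V) 0 i = \sum_(j < n | j != i) V i j * (h 0 i + h 0 j).
Proof.
rewrite mxE (bigD1 i) //= V_diag mulr_sumr -big_split /=.
by apply: eq_bigr => j _; rewrite -[in V j i]V_sym mxE; ring.
Qed.

Lemma mulmx_Lclass_ge (h : 'rV[R]_n) lo i : (forall j, lo <= h 0 j) ->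
  (h 0 i + lo) * V i i + m * \sum_(j < n | j != i) (h 0 j - lo) <= (h *m V) 0 i.
Proof.
move=> lo_le; rewrite mulmx_Lclass V_diag !mulr_sumr -big_split /=.
apply: ler_sum => j ji; rewrite eq_sym in ji.
have [m_le _] := andP (V_offdiag ji); have := lo_le j; nra.
Qed.

Lemma mulmx_Lclass_le (h : 'rV[R]_n) hi i : (forall j, h 0 j <= hi) ->
  (h *m V) 0 i + m * \sum_(j < n | j != i) (hi - h 0 j) <= (h 0 i + hi) * V i i.
Proof.
move=> le_hi; rewrite mulmx_Lclass V_diag !mulr_sumr -big_split /=.
apply: ler_sum => j ji; rewrite eq_sym in ji.
have [m_le _] := andP (V_offdiag ji); have := le_hi j; nra.
Qed.

Section Extremal.
Variables (h : 'rV[R]_n) (g : R) (a b : 'I_n).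
Hypotheses (g_ge0 : 0 <= g) (h_row : forall i, h 0 i != 0 -> - g <= (h *m V) 0 i <= 0).
Hypotheses (h_le_a : forall j, h 0 j <= h 0 a) (b_le_h : forall j, h 0 b <= h 0 j).

Let sum_above_min_ge0 i : 0 <= m * \sum_(j < n | j != i) (h 0 j - h 0 b).
Proof. by apply: mulr_ge0 (ltW m_gt0) (sumr_ge0 _ _) => j _; rewrite subr_ge0. Qed.

Let sum_below_max_ge0 i : 0 <= m * \sum_(j < n | j != i) (h 0 a - h 0 j).
Proof. by apply: mulr_ge0 (ltW m_gt0) (sumr_ge0 _ _) => j _; rewrite subr_ge0. Qed.

Lemma extremal_sum_le0 : h 0 a + h 0 b <= 0.
Proof.
have [ha0|ha0] := eqVneq (h 0 a) 0; first by rewrite ha0 add0r -ha0.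
have [_ row_le0] := andP (h_row ha0).
have := mulmx_Lclass_ge a b_le_h; have := sum_above_min_ge0 a.
by rewrite -(pmulr_lle0 _ (Lclass_diag_gt0 a)); lra.
Qed.

Lemma extremal_sum_ge : - (h 0 a + h 0 b) <= g / ((n%:R - 1) * m).
Proof.
rewrite ler_pdivlMr //.
have [hb0|hb0] := eqVneq (h 0 b) 0.
  have := h_le_a b; rewrite hb0 addr0 => ha_ge0.
  by apply: le_trans g_ge0; rewrite mulNr oppr_le0 mulr_ge0 // ltW.
have [row_ge _] := andP (h_row hb0).
have := mulmx_Lclass_le b h_le_a; have := sum_below_max_ge0 b.
have := Lclass_diag_ge b; have := extremal_sum_le0; nra.
Qed.

Lemma extremal_spread : h 0 a - h 0 b <= g * (m + M) / (m ^+ 2 * (n%:R - 2)).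
Proof.
have mN2_gt0 : 0 < m ^+ 2 * (n%:R - 2) by apply: mulr_gt0; [exact: exprn_gt0 | have := N3; lra].
have sum_bound_le_spread_bound : g / ((n%:R - 1) * m) <= g * (m + M) / (m ^+ 2 * (n%:R - 2)).
  rewrite ler_pdivrMr // mulrAC ler_pdivlMr //.
  rewrite -[g * (m + M) * _]mulrA; apply: ler_wpM2l => //.
  have := mulr_ge0 (le_trans (ltW m_gt0) Lclass_M_ge_m) (ltW n1m_gt0); nra.
have [ha0|ha0] := eqVneq (h 0 a) 0.
  by apply: le_trans sum_bound_le_spread_bound; apply: le_trans extremal_sum_ge; rewrite ha0 !add0r.
have [hb0|hb0] := eqVneq (h 0 b) 0.
  apply: le_trans sum_bound_le_spread_bound; have := extremal_sum_le0; rewrite hb0 subr0 addr0 => ha_le0.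
  by apply: le_trans ha_le0 _; apply: divr_ge0 (ltW n1m_gt0).
have [_ row_a_le0] := andP (h_row ha0).
have [row_b_ge _] := andP (h_row hb0).
have sum_a_le0 := extremal_sum_le0.
have diag_b : (h 0 b + h 0 a) * V b b <= 0.
  by rewrite pmulr_lle0 ?Lclass_diag_gt0 // addrC.
have spread_by_rows : m * ((n%:R - 2) * (h 0 a - h 0 b)) <= g - (h 0 a + h 0 b) * V a a.
  have := mulmx_Lclass_ge a b_le_h; have := mulmx_Lclass_le b h_le_a.
  rewrite -(sumr_neq_spread (fun j => h 0 j)) mulrDr; lra.
have diag_a : - (h 0 a + h 0 b) * V a a <= - (h 0 a + h 0 b) * ((n%:R - 1) * M).
  by apply: ler_wpM2l; [rewrite oppr_ge0 | exact: Lclass_diag_le].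
have := extremal_sum_ge; rewrite ler_pdivlMr // => sum_b.
rewrite ler_pdivlMr //.
have M_ge0 := le_trans (ltW m_gt0) Lclass_M_ge_m.
have spread_bound : m * ((n%:R - 2) * (h 0 a - h 0 b))
    <= g + - (h 0 a + h 0 b) * ((n%:R - 1) * M) by lra.
have := ler_wpM2l (ltW m_gt0) spread_bound; have := ler_wpM2l M_ge0 sum_b.
lra.
Qed.

End Extremal.

Lemma Lclass_bound (h : 'rV[R]_n) (g : R) : 0 <= g ->
    (forall i, h 0 i != 0 -> - g <= (h *m V) 0 i <= 0) ->
  forall i, `|h 0 i| <= Lbound n m M g.
Proof.
move=> g_ge0 h_row i.
have [a _ a_max] := @arg_maxP _ _ _ i predT (fun j => h 0 j) isT.
have [b _ b_min] := @arg_minP _ _ _ i predT (fun j => h 0 j) isT.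
have h_le_a j : h 0 j <= h 0 a by exact: a_max.
have b_le_h j : h 0 b <= h 0 j by exact: b_min.
have sum_le0 := extremal_sum_le0 h_row h_le_a b_le_h.
have sum_ge := extremal_sum_ge g_ge0 h_row h_le_a b_le_h.
have spread := extremal_spread g_ge0 h_row h_le_a b_le_h.
by rewrite /Lbound ler_norml; have := h_le_a i; have := b_le_h i; lra.
Qed.

Lemma Lclass_unitmx : V \in unitmx.
Proof.
apply: unitmx_of_kernel_bound => x x_row i; rewrite -(Lbound0 n m M).
exact: Lclass_bound (lexx 0) x_row i.
Qed.

End Lclass.

Lemma rsubmx_mul_row0 (R : pzSemiRingType) (k r q p s : nat)
    (x : 'M[R]_(k, q)) (A : 'M[R]_(r + q, p + s)) :
  rsubmx (row_mx 0 x *m A) = x *m drsubmx A.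
Proof. by rewrite -{1}[A]vsubmxK mul_row_col mul0mx add0r mulmx_rsub. Qed.

Section LclassBlock.
Variables (R : realFieldType) (r q : nat) (m M : R) (V : 'M[R]_(r + q)).
Hypotheses (n_ge3 : (3 <= r + q)%N) (m_gt0 : 0 < m).
Hypotheses (V_sym : V^T = V) (V_L : in_Lclass m M V).

Lemma Lclass_drsubmx_bound (x : 'rV[R]_q) (g : R) : 0 <= g ->
    (forall i, x 0 i != 0 -> - g <= (x *m drsubmx V) 0 i <= 0) ->
  forall i, `|x 0 i| <= Lbound (r + q) m M g.
Proof.
move=> g_ge0 x_row i; rewrite -(row_mxEr (0 : 'rV_r)).
apply: (Lclass_bound n_ge3 m_gt0 V_sym V_L g_ge0) => j.
rewrite -(splitK j); case: split => k /=; first by rewrite row_mxEl mxE eqxx.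
rewrite row_mxEr.
have -> : (row_mx 0 x *m V) 0 (rshift r k) = (x *m drsubmx V) 0 k.
  by rewrite -rsubmx_mul_row0 [RHS]mxE.
exact: x_row.
Qed.

Lemma Lclass_drsubmx_unitmx : drsubmx V \in unitmx.
Proof.
apply: unitmx_of_kernel_bound => x x_row i; rewrite -(Lbound0 (r + q) m M).
exact: Lclass_drsubmx_bound (lexx 0) x_row i.
Qed.

End LclassBlock.

Lemma mxmaxnorm_le (R : realFieldType) p q (J : 'M[R]_(p, q)) T :
  0 <= T -> (forall i j, `|J i j| <= T) -> mxmaxnorm J <= T.
Proof.
move=> T_ge0 J_le; rewrite /mxmaxnorm.
elim/big_ind: _ => // [x y|i _]; first by rewrite ge_max => -> ->.
by elim/big_ind: _ => // x y; rewrite ge_max => -> ->.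
Qed.

Lemma mulmx_scaled_row_inv_diag (R : realFieldType) p (A : 'M[R]_p) k i :
    A \in unitmx -> A k k != 0 ->
  ((A k k *: row k (invmx A - inv_diag A)) *m A) 0 i = A k k * (k == i)%:R - A k i.
Proof.
move=> A_unit Akk_neq0.
by rewrite -scalemxAl -row_mul mulmxBl mulVmx // mul_diag_mx !mxE mulrBr mulrA mulfV // mul1r.
Qed.

Lemma mxmaxnorm_invmx_sub_inv_diag_le (R : realFieldType) p (A : 'M[R]_p) (L M K : R) :
    A \in unitmx -> 0 < L -> 0 <= M -> 0 <= K ->
    (forall k, L <= A k k) -> (forall k i, k != i -> 0 <= A k i <= M) ->
    (forall x : 'rV_p, (forall i, x 0 i != 0 -> - M <= (x *m A) 0 i <= 0) ->
      forall i, `|x 0 i| <= K) ->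
  mxmaxnorm (invmx A - inv_diag A) <= K / L.
Proof.
move=> A_unit L_gt0 M_ge0 K_ge0 diag_ge offdiag bound.
apply: mxmaxnorm_le => [|k i]; first exact: divr_ge0 (ltW L_gt0).
have Akk_gt0 := lt_le_trans L_gt0 (diag_ge k).
have x_row j : - M <= ((A k k *: row k (invmx A - inv_diag A)) *m A) 0 j <= 0.
  rewrite mulmx_scaled_row_inv_diag ?lt0r_neq0 //.
  have [<-|kj] := eqVneq k j; first by rewrite mulr1 subrr oppr_le0 M_ge0 lexx.
  by rewrite mulr0 sub0r lerN2 oppr_le0 andbC; apply: offdiag.
have := bound _ (fun j _ => x_row j) i.
rewrite mxE [row _ _ _ _]mxE normrM (gtr0_norm Akk_gt0) ler_pdivlMr // => le_K.
by apply: le_trans le_K; rewrite mulrC; apply: ler_wpM2r; [exact: normr_ge0 | exact: diag_ge].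
Qed.

Lemma Lbound_div_le (R : realFieldType) n (b c : R) : (3 <= n)%N -> 0 < c -> c <= b ->
  Lbound n (1 / b) (1 / c) (1 / c) / ((n%:R - 1) * (1 / b))
  <= 2 * b ^+ 2 / (c * (n%:R - 1) ^+ 2) * (n%:R * b / (2 * (n%:R - 2) * c) + 1 / 2).
Proof.
move=> n_ge3 c_gt0 c_le_b; have N3 : 3 <= n%:R :> R by rewrite (ler_nat R 3).
rewrite -subr_ge0 (_ : _ - _ = b ^+ 2 * ((n%:R + 1) * b - c)
                             / (2 * c ^+ 2 * (n%:R - 1) ^+ 2 * (n%:R - 2))).
  apply: divr_ge0; first by apply: mulr_ge0; [exact: sqr_ge0 | nra].
  by apply: mulr_ge0; [apply: mulr_ge0; [nra | exact: sqr_ge0] | lra].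
by rewrite /Lbound; field; apply/and4P; split; apply: lt0r_neq0; lra.
Qed.

Theorem lemma2 (R : realFieldType) (r m : nat) (b c : R)
  (hn : (3 <= r + m)%N) (hr : (1 <= r)%N) (hm : (1 <= m)%N)
  (hb : 0 < 1 / b) (hbc : 1 / b <= 1 / c)
  (V : 'M[R]_(r + m)) (hsym : V^T = V) (hV : in_Lclass (1 / b) (1 / c) V) :
  let n : R := (r + m)%:R in
  let V22 : 'M[R]_m := drsubmx V in
  [/\ V \in unitmx, V22 \in unitmx &
      Num.max (mxmaxnorm (invmx V - inv_diag V))
              (mxmaxnorm (invmx V22 - inv_diag V22))
      <= 2 * b ^+ 2 / (c * (n - 1) ^+ 2)
         * (n * b / (2 * (n - 2) * c) + 1 / 2)].
Proof.
move=> n V22.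
have c_gt0 : 0 < c by rewrite -invr_gt0 -div1r (lt_le_trans hb hbc).
have c_le_b : c <= b by move: hbc; rewrite !div1r lef_pV2 ?posrE // -invr_gt0 -div1r.
have M_ge0 : 0 <= 1 / c := le_trans (ltW hb) hbc.
have offdiag i j : i != j -> 0 <= V i j <= 1 / c.
  by move=> ij; have /andP[lo ->] := proj2 hV i j ij; rewrite (le_trans (ltW hb) lo).
have V_unit := Lclass_unitmx hn hb hsym hV.
have V22_unit : V22 \in unitmx := Lclass_drsubmx_unitmx hn hb hsym hV.
have K_ge0 := Lbound_ge0 hn hb M_ge0 M_ge0.
have L_gt0 : 0 < (n - 1) * (1 / b).
  by apply: mulr_gt0 => //; rewrite subr_gt0 (ltr_nat R 1) (leq_trans _ hn).
split=> //; rewrite ge_max; apply/andP; split.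
all: apply: le_trans (Lbound_div_le hn c_gt0 c_le_b).
all: apply: (mxmaxnorm_invmx_sub_inv_diag_le (M := 1 / c)) => //.
- exact: Lclass_diag_ge hV.
- by move=> x; exact: (Lclass_bound hn hb hsym hV (h := x) M_ge0).
- by move=> k; rewrite !mxE; exact: (Lclass_diag_ge hV (rshift r k)).
- by move=> k i ki; rewrite !mxE; apply: offdiag; rewrite (inj_eq (@rshift_inj _ _)).
- by move=> x; exact: (Lclass_drsubmx_bound hn hb hsym hV (x := x) M_ge0).
Qed.
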